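(* Let $G$ be a topological groupoid such that $G^{(0)}$ is locally compact. Consider the assertions: (i) $G$ is proper; (ii) $(r,s)\colon G\to G^{(0)}\times G^{(0)}$ is closed and $G_x^x$ is quasi-compact for every $x\in G^{(0)}$; (iii) for all quasi-compact subspaces $K,L$ of $G^{(0)}$, $G_K^L$ is quasi-compact; (iii)' for all compact subspaces $K,L$ of $G^{(0)}$, $G_K^L$ is quasi-compact; (iv) for every quasi-compact subspace $K$ of $G^{(0)}$, $G_K^K$ is quasi-compact; (v) for all $x,y\in G^{(0)}$ there exist compact neighbourhoods $K_x$ of $x$ and $L_y$ of $y$ such that $G_{K_x}^{L_y}$ is quasi-compact. Then (i)$\iff$(ii)$\iff$(iii)$\iff$(iii)'$\iff$(v)$\implies$(iv). If $G^{(0)}$ is Hausdorff, then (i)–(v) are all equivalent.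
   Context: Quasi-compact: every open cover has a finite subcover; compact: quasi-compact and Hausdorff; locally compact: every point has a compact neighbourhood (not necessarily Hausdorff). A continuous map is proper if it is closed and has quasi-compact fibres. $G$ is proper if $(r,s)\colon G\to G^{(0)}\times G^{(0)}$ is proper. $G_K^L=r^{-1}(L)\cap s^{-1}(K)$, $G_x^x=G_{\{x\}}^{\{x\}}$. *)

From HB Require Import structures.
From mathcomp Require Import all_boot.
From mathcomp Require Import all_classical.
From mathcomp Require Import topology.
Set Implicit Arguments. Unset Strict Implicit. Unset Printing Implicit Defensive.
Local Open Scope classical_set_scope.

(* The unit
   map u : X -> G is continuous with continuous retraction r, hence X is
   homeomorphic to the subspace u(X) = G^(0) of G. Multiplication is
   a total function that is only meaningful on composable pairs
   (s g = r h, product g h), continuous on G^(2) with the subspace topology. *)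
Record topgroupoid (G X : topologicalType) := TopGroupoid {
  rg : G -> X;
  sg : G -> X;
  ug : X -> G;
  mulg : G -> G -> G;
  invg : G -> G;
  rg_u : forall x, rg (ug x) = x;
  sg_u : forall x, sg (ug x) = x;
  rg_mul : forall g h, sg g = rg h -> rg (mulg g h) = rg g;
  sg_mul : forall g h, sg g = rg h -> sg (mulg g h) = sg h;
  mulgA : forall g h k, sg g = rg h -> sg h = rg k ->
            mulg g (mulg h k) = mulg (mulg g h) k;
  mul_ul : forall g, mulg (ug (rg g)) g = g;
  mul_ur : forall g, mulg g (ug (sg g)) = g;
  rg_inv : forall g, rg (invg g) = sg g;
  sg_inv : forall g, sg (invg g) = rg g;
  mul_invr : forall g, mulg g (invg g) = ug (rg g);
  mul_invl : forall g, mulg (invg g) g = ug (sg g);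
  rg_cont : continuous rg;
  sg_cont : continuous sg;
  ug_cont : continuous ug;
  invg_cont : continuous invg;
  mulg_cont : {within [set p : G * G | sg p.1 = rg p.2],
                 continuous (fun p : G * G => mulg p.1 p.2)}
}.

Definition is_closed_map (T U : topologicalType) (f : T -> U) :=
  forall C : set T, closed C -> closed (f @` C).

(* proper map: closed with quasi-compact fibres ("compact" in
   mathcomp-analysis is quasi-compactness, no separation assumed) *)
Definition is_proper_map (T U : topologicalType) (f : T -> U) :=
  is_closed_map f /\ forall y : U, compact (f @^-1` [set y]).

Definition hausdorff_in (T : topologicalType) (A : set T) :=
  forall x y, A x -> A y -> x <> y ->
    exists U V : set T, [/\ open U, open V, U x, V y & U `&` V `&` A = set0].

(* compact subspace = quasi-compact and Hausdorff *)
Definition compact_hd (T : topologicalType) (A : set T) :=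
  compact A /\ hausdorff_in A.

Definition loc_compact_space (T : topologicalType) :=
  forall x : T, exists K : set T, nbhs x K /\ compact_hd K.

Definition rs_map (G X : topologicalType) (Gp : topgroupoid G X) :=
  fun g : G => (rg Gp g, sg Gp g).

Definition proper_groupoid (G X : topologicalType) (Gp : topgroupoid G X) :=
  is_proper_map (rs_map Gp).

Definition GKL (G X : topologicalType) (Gp : topgroupoid G X) (K L : set X) :=
  rg Gp @^-1` L `&` sg Gp @^-1` K.

From Pilot Require Import Defs.
From mathcomp Require Import all_boot all_classical topology.
Set Implicit Arguments.
Unset Strict Implicit.
Unset Printing Implicit Defensive.
Local Open Scope classical_set_scope.

(* The fibre of (r, s) over (r g, s g) is the translate g G_(s g)^(s g) of an
   isotropy group, which gives (i) <=> (ii).  Preimages of quasi-compact sets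
   under a proper map are quasi-compact, which gives (i) => (iii) => (iii)'
   => (v), (iv).  Conversely, (r, s) is proper as soon as every point of
   X * X has a Hausdorff neighbourhood L_y * K_x with quasi-compact preimage
   G_(K_x)^(L_y): closedness and compact fibres can be checked inside that
   preimage, since a quasi-compact subset of a Hausdorff subspace is closed in
   it.  When X is Hausdorff, G_K^L is closed in G_(K u L)^(K u L), so
   (iv) => (iii). *)

Lemma compact_closed_in (T : topologicalType) (N Q : set T) z :
  hausdorff_in N -> compact Q -> Q `<=` N -> N z -> closure Q z -> Q z.
Proof.
move=> hN cQ QN Nz clz.
have [|a [Qa cla]] := cQ _ (within_nbhs_proper clz); first exact: withinT.
have [<-//|naz] := pselect (a = z).
have [U [V [oU oV Ua Vz UV]]] := hN a z (QN _ Qa) Nz naz.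
have QV : within Q (nbhs z) (V `&` Q).
  by apply: filterS (open_nbhs_nbhs (conj oV Vz)) => x Vx Qx.
have [p [[Vp Qp] Up]] := cla _ _ QV (open_nbhs_nbhs (conj oU Ua)).
suff : (U `&` V `&` N) p by rewrite UV.
by split; [split|apply: QN].
Qed.

Lemma hausdorff_inX (A B : topologicalType) (P : set A) (Q : set B) :
  hausdorff_in P -> hausdorff_in Q -> hausdorff_in (P `*` Q).
Proof.
have open_fst (U : set A) : open U -> open (fst @^-1` U : set (A * B)).
  by apply: open_comp => p _; exact: cvg_fst.
have open_snd (V : set B) : open V -> open (snd @^-1` V : set (A * B)).
  by apply: open_comp => p _; exact: cvg_snd.
move=> hP hQ [a b] [a' b'] [/= Pa Qb] [/= Pa' Qb'] neq.
have [ea|na] := pselect (a = a'); last first.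
  have [U [V [oU oV Ua Va' UV]]] := hP a a' Pa Pa' na.
  exists (fst @^-1` U), (fst @^-1` V); split => //; try exact: open_fst.
  apply/seteqP; split => // -[p q] [[/= Up Vp] [/= Pp _]].
  suff : (U `&` V `&` P) p by rewrite UV.
  by [].
have nb : b <> b' by move=> eb; apply: neq; rewrite ea eb.
have [U [V [oU oV Ub Vb' UV]]] := hQ b b' Qb Qb' nb.
exists (snd @^-1` U), (snd @^-1` V); split => //; try exact: open_snd.
apply/seteqP; split => // -[p q] [[/= Uq Vq] [_ /= Qq]].
suff : (U `&` V `&` Q) q by rewrite UV.
by [].
Qed.

Section ProperMap.
Variables (T U : topologicalType) (f : T -> U).

Lemma closed_map_closure (B : set T) :
  is_closed_map f -> closure (f @` B) `<=` f @` closure B.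
Proof.
move=> fcl; rewrite [X in _ `<=` X](closure_id _).1.
  by apply/closureS/image_subset; exact: subset_closure.
exact/fcl/closed_closure.
Qed.

Lemma proper_map_preimage_compact (K : set U) :
  is_proper_map f -> compact K -> compact (f @^-1` K).
Proof.
move=> [fcl ffib] cK F PF FK.
have [y [Ky]] := cK (f @ F) _ FK; rewrite clusterE => cly.
(* The fibre C over a cluster point y of f @ F meets the closure of every
   member of F, so a cluster point in C of the traces on C clusters F. *)
pose C := f @^-1` [set y].
have C_closure_meet B : F B -> (C `&` closure B) !=set0.
  move=> FB; have fFB : (f @ F) (f @` B).
    exact: filterS (@preimage_image _ _ f B) FB.
  by have [x clBx fxy] := closed_map_closure fcl (cly _ fFB); exists x.
pose H := filter_from F (fun B => C `&` closure B).
have PH : ProperFilter H.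
  apply: filter_from_proper; last by move=> B /C_closure_meet.
  apply: filter_from_filter; first by exists setT; exact: filterT.
  move=> B1 B2 FB1 FB2; exists (B1 `&` B2); first exact: filterI.
  by move=> x [Cx clx]; split; split => //; apply: closureS clx => ? [].
have [|x [Cx]] := ffib y H PH.
  by exists setT; [exact: filterT | move=> ? []].
rewrite !clusterE => clx; exists x; split; first by rewrite /= Cx.
move=> A FA; rewrite [closure A](closure_id _).1; last exact: closed_closure.
apply: closureS (clx (C `&` closure A) _); first by move=> ? [].
by exists A.
Qed.

Section LocallyProperMap.
Hypothesis f_cont : continuous f.
Hypothesis f_local : forall y : U, exists N : set U,
  [/\ nbhs y N, hausdorff_in N & compact (f @^-1` N)].

Lemma locally_proper_closed_map : is_closed_map f.
Proof.
move=> C clC y clfCy.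
have [N [Ny hN cfN]] := f_local y.
pose A := f @^-1` N `&` C.
have cfA : compact (f @` A).
  apply: continuous_compact (compact_closedI cfN clC).
  exact: continuous_subspaceT.
suff [x [_ Cx] <-] : (f @` A) y by exists x.
apply: (compact_closed_in hN cfA); first by move=> _ [x [Nx _] <-].
  exact: nbhs_singleton.
move=> W Wy; have [_ [[x Cx <-] [Wfx Nfx]]] := clfCy _ (filterI Wy Ny).
by exists (f x); split => //; exists x.
Qed.

Lemma locally_proper_fibre_compact y : compact (f @^-1` [set y]).
Proof.
have [N [Ny hN cfN]] := f_local y.
have -> : f @^-1` [set y] = f @^-1` N `&` f @^-1` closure [set y].
  apply/seteqP; split => [x /= ->|x [Nfx clfx]].
    by split; [exact: nbhs_singleton | exact: subset_closure].
  apply: (compact_closed_in hN (@compact_set1 _ y) _ Nfx clfx).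
  by move=> _ ->; exact: nbhs_singleton.
apply: compact_closedI cfN _.
exact: (continuous_closedP _).1 f_cont _ (@closed_closure _ [set y]).
Qed.

Lemma locally_proper_map : is_proper_map f.
Proof.
split; first exact: locally_proper_closed_map.
exact: locally_proper_fibre_compact.
Qed.

End LocallyProperMap.
End ProperMap.

Section Groupoid.
Variables (G X : topologicalType) (Gp : topgroupoid G X).
Local Notation r := (rg Gp).
Local Notation s := (sg Gp).
Local Notation rs := (rs_map Gp).

Lemma rs_map_continuous : continuous rs.
Proof. by move=> g; apply: cvg_pair; [exact: rg_cont | exact: sg_cont]. Qed.

Lemma GKLE K L : GKL Gp K L = rs @^-1` (L `*` K).
Proof. by []. Qed.

Lemma GKL_set1 x : GKL Gp [set x] [set x] = rs @^-1` [set (x, x)].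
Proof. by apply/seteqP; split => g; rewrite /GKL /rs_map /= => -[-> ->]. Qed.

Lemma mulg_left_continuous g :
  {within r @^-1` [set s g], continuous (mulg Gp g)}.
Proof.
apply/subspace_continuousP => h /= rh.
have := (subspace_continuousP _ _).1 (@mulg_cont _ _ Gp) (g, h) (esym rh).
apply: cvg_trans => W nW.
have SW : nbhs (g, h) [set p | s p.1 = r p.2 -> W (mulg Gp p.1 p.2)] := nW.
have pair_cvg : (fun k => (g, k)) @ nbhs h --> nbhs (g, h).
  by apply: cvg_pair; [exact: cvg_cst | exact: cvg_id].
have SWh : nbhs h [set k | s g = r k -> W (mulg Gp g k)] := pair_cvg _ SW.
by apply: filterS SWh => k SWk rk; apply: SWk.
Qed.

Lemma rs_fibreE g :
  rs @^-1` [set (r g, s g)] = mulg Gp g @` GKL Gp [set s g] [set s g].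
Proof.
apply/seteqP; split => [k [rk sk] | _ [h [/= rh sh] <-]]; last first.
  by rewrite /rs_map rg_mul ?sg_mul ?rh ?sh.
exists (mulg Gp (invg Gp g) k).
  by rewrite /GKL /= rg_mul ?sg_mul ?rg_inv ?sg_inv.
by rewrite Defs.mulgA ?mul_invr ?rg_inv ?sg_inv // -rk mul_ul.
Qed.

Lemma compact_rs_fibre (p : X * X) :
  (forall x, compact (GKL Gp [set x] [set x])) -> compact (rs @^-1` [set p]).
Proof.
move=> cGxx; have [[g <-]|nop] := pselect (exists g, rs g = p); last first.
  suff -> : rs @^-1` [set p] = set0 by exact: compact0.
  by apply/seteqP; split => // g rsg; apply: nop; exists g.
rewrite rs_fibreE; apply: continuous_compact (cGxx _).
by apply: continuous_subspaceW (@mulg_left_continuous g) => h [].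
Qed.

Lemma proper_groupoidP :
  proper_groupoid Gp <->
  is_closed_map rs /\ forall x, compact (GKL Gp [set x] [set x]).
Proof.
split=> [[rs_closed rs_fibre] | [rs_closed cGxx]]; split => //.
  by move=> x; rewrite GKL_set1.
by move=> p; exact: compact_rs_fibre.
Qed.

Lemma proper_groupoid_GKL_compact K L :
  proper_groupoid Gp -> compact K -> compact L -> compact (GKL Gp K L).
Proof.
move=> Gproper cK cL; rewrite GKLE.
exact: proper_map_preimage_compact (compact_setX cL cK).
Qed.

Lemma proper_groupoid_of_local_GKL :
  (forall x y : X, exists Kx Ly : set X,
     [/\ nbhs x Kx, compact_hd Kx, nbhs y Ly, compact_hd Ly
       & compact (GKL Gp Kx Ly)]) ->
  proper_groupoid Gp.
Proof.
move=> GKL_local; apply: locally_proper_map rs_map_continuous _ => -[y x].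
have [Kx [Ly [Kx_x [_ hKx] Ly_y [_ hLy] cG]]] := GKL_local x y.
exists (Ly `*` Kx); split; [by exists (Ly, Kx) | exact: hausdorff_inX | by []].
Qed.

Lemma GKL_compact_of_diagonal : hausdorff_space X ->
  (forall K, compact K -> compact (GKL Gp K K)) ->
  forall K L, compact K -> compact L -> compact (GKL Gp K L).
Proof.
move=> hX cGKK K L cK cL.
have -> : GKL Gp K L = GKL Gp (K `|` L) (K `|` L) `&` GKL Gp K L.
  by apply/esym/setIidr => g [Lg Kg]; split; [right | left].
apply: compact_closedI (cGKK _ (compactU cK cL)) _.
by apply: closedI; apply: (continuous_closedP _).1;
  [exact: rg_cont | exact: compact_closed
  | exact: sg_cont | exact: compact_closed].
Qed.

End Groupoid.

Theorem proposition2p10 (G X : topologicalType) (Gp : topgroupoid G X) :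
  loc_compact_space X ->
  let P1 := proper_groupoid Gp in
  let P2 := is_closed_map (rs_map Gp) /\
            (forall x : X, compact (GKL Gp [set x] [set x])) in
  let P3 := forall K L : set X, compact K -> compact L -> compact (GKL Gp K L) in
  let P3' := forall K L : set X, compact_hd K -> compact_hd L ->
               compact (GKL Gp K L) in
  let P4 := forall K : set X, compact K -> compact (GKL Gp K K) in
  let P5 := forall x y : X, exists Kx Ly : set X,
               [/\ nbhs x Kx, compact_hd Kx, nbhs y Ly, compact_hd Ly
                 & compact (GKL Gp Kx Ly)] in
  (P1 <-> P2) /\ (P1 <-> P3) /\ (P1 <-> P3') /\ (P1 <-> P5) /\ (P1 -> P4) /\
  (@hausdorff_space X -> (P4 -> P1)).
Proof.
move=> lcX P1 P2 P3 P3' P4 P5.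
have P13 : P1 -> P3 by move=> Gproper K L; exact: proper_groupoid_GKL_compact.
have P33' : P3 -> P3' by move=> cGKL K L [cK _] [cL _]; exact: cGKL.
have P3'5 : P3' -> P5.
  move=> cGKL x y; have [Kx [Kx_x cKx]] := lcX x; have [Ly [Ly_y cLy]] := lcX y.
  by exists Kx, Ly; split => //; exact: cGKL.
have P51 : P5 -> P1 := @proper_groupoid_of_local_GKL _ _ Gp.
split; first exact: proper_groupoidP.
split; first by split => [/P13 | /P33'/P3'5/P51].
split; first by split => [/P13/P33' | /P3'5/P51].
split; first by split => [/P13/P33'/P3'5 | /P51].
split; first by move=> /P13 cGKL K cK; exact: cGKL.
by move=> hX /(GKL_compact_of_diagonal hX)/P33'/P3'5/P51.
Qed.
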